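(* Let $(\mathbb{S},\Sigma)$ be a measurable space, let $\{\mu_n\}_{n=1,2,\ldots}$ be a sequence of finite measures on $(\mathbb{S},\Sigma)$, and let $\{f_n\}_{n=1,2,\ldots}$ be a sequence of measurable $[-\infty,+\infty]$-valued functions on $\mathbb{S}$. Then there exists $N\in\{0,1,2,\ldots\}$ such that $\{f_{n+N}\}_{n=1,2,\ldots}$ is uniformly integrable with respect to $\{\mu_{n+N}\}_{n=1,2,\ldots}$ if and only if $\{f_n\}_{n=1,2,\ldots}$ is asymptotically uniformly integrable with respect to $\{\mu_n\}_{n=1,2,\ldots}$.
   Context: A sequence of measurable $[-\infty,+\infty]$-valued functions $\{f_n\}$ is uniformly integrable (u.i.) with respect to a sequence of finite measures $\{\mu_n\}$ if $\lim_{K\to+\infty}\sup_{n=1,2,\ldots}\int_{\mathbb{S}}|f_n(s)|\,\mathbf{1}\{s: |f_n(s)|\ge K\}\,\mu_n(ds)=0$, and asymptotically uniformly integrable (a.u.i.) with respect to $\{\mu_n\}$ if $\lim_{K\to+\infty}\limsup_{n\to\infty}\int_{\mathbb{S}}|f_n(s)|\,\mathbf{1}\{s: |f_n(s)|\ge K\}\,\mu_n(ds)=0$. *)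

From HB Require Import structures.
From mathcomp Require Import all_boot all_order all_algebra.
From mathcomp Require Import all_classical all_reals all_analysis.
From mathcomp Require Import lebesgue_measure measurable_realfun lebesgue_integral.
Set Implicit Arguments. Unset Strict Implicit. Unset Printing Implicit Defensive.
Import Order.TTheory GRing.Theory Num.Theory.
Local Open Scope classical_set_scope.
Local Open Scope ring_scope.
Local Open Scope ereal_scope.

(* Sequences are indexed from 0 in Rocq: index n corresponds to the paper's n+1. *)

Definition tail_int d (T : measurableType d) (R : realType)
  (mu : {measure set T -> \bar R}) (f : T -> \bar R) (K : R) : \bar R :=
  \int[mu]_x (`|f x| * (\1_[set y : T | (K%:E <= `|f y|)%E] x)%:E).

Definition unif_integrable d (T : measurableType d) (R : realType)
  (mu : nat -> {finite_measure set T -> \bar R}) (f : nat -> T -> \bar R) : Prop :=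
  (fun K : R => ereal_sup (range (fun n => tail_int (mu n) (f n) K)))
    @ +oo%R --> 0.

Definition asym_unif_integrable d (T : measurableType d) (R : realType)
  (mu : nat -> {finite_measure set T -> \bar R}) (f : nat -> T -> \bar R) : Prop :=
  (fun K : R => limn_esup (fun n => tail_int (mu n) (f n) K))
    @ +oo%R --> 0.

From HB Require Import structures.
From mathcomp Require Import all_boot all_order all_algebra.
From mathcomp Require Import all_classical all_reals all_analysis.
From mathcomp Require Import lebesgue_measure measurable_realfun lebesgue_integral.
Import Order.TTheory GRing.Theory Num.Theory.
Local Open Scope classical_set_scope.
Local Open Scope ring_scope.
Local Open Scope ereal_scope.

(* Let t_n(K) be the tail integrals: they are nonnegative and nonincreasing in
   K.  Uniform integrability of the N-shifted sequence gives a.u.i. because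
   limsup_n t_n(K) <= sup_{n >= N} t_n(K).  Conversely, a.u.i. yields K1 and N
   with t_n(K1) finite for n >= N, hence t_n(K) -> 0 as K -> +oo for each such n
   by dominated convergence.  Given e > 0, a.u.i. also yields K2 and M with
   t_n(K2) < e for all n >= M; the finitely many n in [N, M) are handled one by
   one, and monotonicity in K handles the others. *)

Section cvge0.
Context {R : realType} {T : Type} {F : set_system T} {FF : Filter F}.
Implicit Type u : T -> \bar R.

Lemma cvge0_lt u : u @ F --> 0 ->
  forall e : R, (0 < e)%R -> \forall x \near F, u x < e%:E.
Proof.
by move=> u0 e e0; apply: (u0 [set y | y < e%:E]); apply: open_ereal_lt'.
Qed.

Lemma ge0_cvge0 u : (forall x, 0 <= u x) ->
  (forall e : R, (0 < e)%R -> \forall x \near F, u x <= e%:E) -> u @ F --> 0.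
Proof.
move=> u0 ule.
have ufin : \forall x \near F, u x \is a fin_num.
  apply: filterS (ule 1%R ltr01) => x ux.
  by rewrite ge0_fin_numE ?u0// (le_lt_trans ux)// ltry.
apply/fine_cvgP; split => //; apply/cvgrPdist_le => e e0.
apply: filterS2 ufin (ule e e0) => x uxfin ux /=.
by rewrite sub0r normrN ger0_norm ?fine_ge0 ?u0// -lee_fin fineK.
Qed.

End cvge0.

Section limn_esup_shift.
Context {R : realType}.
Implicit Type v : (\bar R)^nat.

Lemma limn_esupE v : limn_esup v = ereal_inf (range (esups v)).
Proof. by rewrite limn_esup_lim; apply/cvg_lim => //; exact: cvg_esups_inf. Qed.

Lemma limn_esup_lt v x : limn_esup v < x ->
  exists N, forall n, (N <= n)%N -> v n < x.
Proof.
rewrite limn_esupE => /ereal_inf_lt[_ [N _ <-] vN]; exists N => n Nn.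
by apply: le_lt_trans vN; apply: ereal_sup_ubound; exists n.
Qed.

Lemma sdrop_shift v N n : sdrop (fun k => v (k + N)%N) n = sdrop v (n + N).
Proof.
apply/seteqP; split => _ [k /= nk <-].
  by exists (k + N)%N => //=; rewrite leq_add2r.
have Nk : (N <= k)%N by rewrite (leq_trans (leq_addl _ _) nk).
by exists (k - N)%N => //=; [rewrite leq_subRL// addnC | rewrite subnK].
Qed.

Lemma limn_esup_shift v N : limn_esup (fun n => v (n + N)%N) = limn_esup v.
Proof.
rewrite !limn_esup_lim; apply/cvg_lim => //.
have -> : esups (fun n => v (n + N)%N) = [sequence esups v (n + N)%N]_n.
  by apply/funext => n; rewrite /esups /= sdrop_shift.
by rewrite cvg_shiftn; exact: is_cvg_esups.
Qed.

Lemma limn_esup_le_sup_shift v N :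
  limn_esup v <= ereal_sup (range (fun n => v (n + N)%N)).
Proof.
rewrite -(limn_esup_shift v N) limn_esupE.
apply: ereal_inf_lbound; exists 0%N => //.
by congr ereal_sup; apply/seteqP; split => _ [k _ <-]; exists k.
Qed.

End limn_esup_shift.

Section uniform_tails.
Context {R : realType} (u : nat -> R -> \bar R).
Hypothesis u_ge0 : forall n K, 0 <= u n K.

Lemma limn_esup_cvge0 N :
  ereal_sup (range (fun n => u (n + N)%N K)) @[K --> +oo%R] --> 0 ->
  limn_esup (u^~ K) @[K --> +oo%R] --> 0.
Proof.
move=> sup_cvg0; apply: ge0_cvge0 => [K|e e0].
  by apply: limf_esup_ge0 => // /filter_ex[].
apply: filterS (cvge0_lt _ sup_cvg0 _ e0) => K /ltW; apply: le_trans.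
exact: limn_esup_le_sup_shift.
Qed.

Hypothesis u_antitone : forall n K1 K2, (K1 <= K2)%R -> u n K2 <= u n K1.

Lemma sup_cvge0 :
  (forall n, u n K @[K --> +oo%R] --> 0) ->
  limn_esup (u^~ K) @[K --> +oo%R] --> 0 ->
  ereal_sup (range (u^~ K)) @[K --> +oo%R] --> 0.
Proof.
move=> u_cvg0 limsup_cvg0; apply: ge0_cvge0 => [K|e e0].
  by apply: le_trans (u_ge0 0 K) _; apply: ereal_sup_ubound; exists 0%N.
have [K2 /= limsupK2] := filter_ex (cvge0_lt _ limsup_cvg0 _ e0).
have [M uM] := limn_esup_lt _ _ limsupK2.
have u_head : \forall K \near +oo%R, forall n, (n < M)%N -> u n K < e%:E.
  apply: filterS (filter_forall _ (fun i : 'I_M => cvge0_lt _ (u_cvg0 i) _ e0)).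
  by move=> K uK n nM; exact: (uK (Ordinal nM)).
near=> K; apply: ge_ereal_sup => _ [n _ <-].
have [nM|Mn] := ltnP n M; first by apply/ltW; apply: (near u_head K).
apply/ltW/(le_lt_trans _ (uM _ Mn))/u_antitone.
by near: K; exact: nbhs_pinfty_ge (num_real K2).
Unshelve. all: by end_near. Qed.

End uniform_tails.

Section tail_integral.
Context d (T : measurableType d) (R : realType).
Variables (mu : {measure set T -> \bar R}) (f : T -> \bar R).

Let tail_fun (K : R) x := `|f x| * (\1_[set y : T | (K%:E <= `|f y|)%E] x)%:E.

Let tail_funE K x : tail_fun K x = if K%:E <= `|f x| then `|f x| else 0.
Proof.
rewrite /tail_fun indicE; case: ifPn => fK; first by rewrite mem_set// mule1.
by rewrite memNset ?mule0//; exact/negP.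
Qed.

Let tail_fun_ge0 K x : 0 <= tail_fun K x.
Proof. by rewrite tail_funE; case: ifP. Qed.

Let tail_fun_antitone K1 K2 x : (K1 <= K2)%R -> tail_fun K2 x <= tail_fun K1 x.
Proof.
move=> K12; rewrite !tail_funE; case: ifPn => fK2; last by case: ifP.
by rewrite ifT// (le_trans _ fK2)// lee_fin.
Qed.

Lemma tail_int_ge0 K : 0 <= tail_int mu f K.
Proof. exact: integral_ge0. Qed.

Hypothesis mf : measurable_fun setT f.

Let measurable_tail_fun K : measurable_fun setT (tail_fun K).
Proof.
apply: emeasurable_funM; first exact: measurableT_comp.
apply/measurable_EFinP/measurable_indic; rewrite -[X in measurable X]setTI.
by apply: emeasurable_fun_c_infty => //; exact: measurableT_comp.
Qed.

Lemma tail_int_antitone K1 K2 :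
  (K1 <= K2)%R -> tail_int mu f K2 <= tail_int mu f K1.
Proof.
move=> K12; apply: ge0_le_integral => //; [exact: measurable_tail_fun..|].
by move=> x _; exact: tail_fun_antitone.
Qed.

Lemma tail_int_cvgn0 K0 : tail_int mu f K0 < +oo ->
  tail_int mu f (K0 + k%:R) @[k --> \oo] --> 0.
Proof.
move=> tail_fin.
have tail_K0_int : mu.-integrable setT (tail_fun K0).
  apply/integrableP; split=> //.
  by under eq_integral do rewrite gee0_abs ?tail_fun_ge0//.
have [] := @dominated_convergence _ _ _ mu setT measurableT
  (fun k => tail_fun (K0 + k%:R)) (cst 0) (tail_fun K0)
  (fun k => measurable_tail_fun _) (measurable_cst _) _ tail_K0_int _.
(* |f| is finite a.e., and tail_fun (K0 + k) x vanishes once K0 + k > |f x|. *)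
- apply: filterS (integrable_ae measurableT tail_K0_int).
  move=> x /(_ I) tail_x_fin _.
  have /fineK fx : `|f x| \is a fin_num.
    move: tail_x_fin; rewrite tail_funE; case: ifPn => //.
    rewrite -ltNge => fK0 _.
    by rewrite ge0_fin_numE// (lt_trans fK0)// ltry.
  apply: cvg_near_cst; apply: filterS (nbhs_infty_gtr (fine `|f x| - K0)) => k.
  by rewrite tail_funE -fx lee_fin ltrBlDl => /lt_geF ->.
- by apply: aeW => x k _; rewrite gee0_abs// tail_fun_antitone// lerDl.
by move=> _ _; rewrite integral0.
Qed.

Lemma tail_int_cvg0 K0 : tail_int mu f K0 < +oo ->
  tail_int mu f K @[K --> +oo%R] --> 0.
Proof.
move=> /tail_int_cvgn0 tail_cvgn0; apply: ge0_cvge0 => [K|e e0].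
  exact: tail_int_ge0.
have [k /= tail_k] := filter_ex (cvge0_lt _ tail_cvgn0 _ e0).
apply: filterS (nbhs_pinfty_ge (num_real (K0 + k%:R))) => K kK.
by apply/ltW/(le_lt_trans _ tail_k)/tail_int_antitone.
Qed.

End tail_integral.

Theorem theorem2p2 (d : measure_display) (T : measurableType d) (R : realType)
  (mu : nat -> {finite_measure set T -> \bar R}) (f : nat -> T -> \bar R)
  (hf : forall n, measurable_fun setT (f n)) :
  (exists N : nat, unif_integrable (fun n => mu (n + N)%N) (fun n => f (n + N)%N))
  <-> asym_unif_integrable mu f.
Proof.
pose t n K := tail_int (mu n) (f n) K.
have t_ge0 n K : 0 <= t n K by exact: tail_int_ge0.
split=> [[N ui]|aui]; first exact: (limn_esup_cvge0 _ t_ge0 _ ui).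
have [K1 /= limsupK1] := filter_ex (cvge0_lt _ aui _ ltr01).
have [N tK1_lt1] := limn_esup_lt _ _ limsupK1.
exists N; apply: (@sup_cvge0 _ (fun n => t (n + N)%N)) => [n K|n K K'|n|].
- exact: t_ge0.
- exact: tail_int_antitone.
- apply: (@tail_int_cvg0 _ _ _ (mu (n + N)%N) _ (hf _) K1).
  by rewrite (lt_trans (tK1_lt1 _ (leq_addl _ _))) ?ltry.
- by under eq_fun do rewrite (limn_esup_shift (t^~ _)).
Qed.
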